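(* Let $q\ge2$, let $\mathbf{u}$ be a probability distribution on $[1:q]$, and let $a\ne b\in[1:q]$. Then for all sufficiently large $n$: $D_{ab}(M_{n,\mathbf{u}})=2$ if $a\notin\mathrm{supp}(\mathbf{u})$ or $b\notin\mathrm{supp}(\mathbf{u})$, and $D_{ab}(M_{n,\mathbf{u}})\le \frac{C_1(\log n)^{(|\mathrm{supp}(\mathbf{u})|-2)/2}}{\sqrt n}$ if $a,b\in\mathrm{supp}(\mathbf{u})$, where $C_1$ is a constant independent of $n$. In particular, if $\mathbf{u}$ has strictly positive entries, then $D_{ab}(M_{n,\mathbf{u}})\le \frac{C_1(\log n)^{(q-2)/2}}{\sqrt n}$ for every $a\ne b$.
   Context: $\mathcal{N}_{q,n}=\{\mathbf{t}\in\mathbb{Z}_{\ge0}^q:\sum_it_i=n\}$. The multinomial distribution is $M_{n,\mathbf{u}}(\mathbf{t})=\frac{n!}{t_1!\cdots t_q!}\prod_iu_i^{t_i}$ for $\mathbf{t}\in\mathcal{N}_{q,n}$ (with $0^0=1$). $\mathrm{supp}(\mathbf{u})=\{i:u_i>0\}$. $\mathbf{e}_c$ is the $c$-th standard unit vector in $\mathbb{Z}^q$. For a distribution $Q$ on $\mathcal{N}_{q,n}$ and $a\ne b$, $D_{ab}(Q)=\sum_{\mathbf{t}\in\mathcal{N}_{q,n+1}}|Q(\mathbf{t}-\mathbf{e}_b)-Q(\mathbf{t}-\mathbf{e}_a)|$, where $Q(\mathbf{s})=0$ whenever $\mathbf{s}\notin\mathcal{N}_{q,n}$ (some coordinate outside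 $[0:n]$). Logarithms base 2. *)

From HB Require Import structures.
From mathcomp Require Import all_boot all_order all_algebra.
From mathcomp Require Import all_classical all_reals all_analysis.
Set Implicit Arguments. Unset Strict Implicit. Unset Printing Implicit Defensive.
Import Order.TTheory GRing.Theory Num.Theory.
Local Open Scope ring_scope.

Section Defs.
Variable R : realType.

(* Multinomial distribution M_{n,u}, as a function on all t : 'I_q -> nat;
   it is 0 outside N_{q,n} (i.e. when sum t <> n). 0^0 = 1 via ^+. *)
Definition multinom (q n : nat) (u : 'I_q -> R) (t : 'I_q -> nat) : R :=
  if (\sum_(i < q) t i == n)%N then
    (n`!)%:R / (\prod_(i < q) (t i)`!)%:R * \prod_(i < q) u i ^+ t i
  else 0.

(* Q(t - e_c), with value 0 when t - e_c has a negative coordinate. *)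
Definition shiftQ (q : nat) (Q : ('I_q -> nat) -> R) (t : 'I_q -> nat) (c : 'I_q) : R :=
  if (0 < t c)%N then Q (fun i => (t i - (i == c))%N) else 0.

(* D_ab(Q) = sum over t in N_{q,n+1} of |Q(t-e_b) - Q(t-e_a)|.
   N_{q,n+1} is enumerated as functions 'I_q -> 'I_(n+2) with coordinate sum n+1. *)
Definition Dab (q n : nat) (Q : ('I_q -> nat) -> R) (a b : 'I_q) : R :=
  \sum_(t : {ffun 'I_q -> 'I_n.+2} | (\sum_(i < q) (t i : nat) == n.+1)%N)
     `| shiftQ Q (fun i => (t i : nat)) b - shiftQ Q (fun i => (t i : nat)) a |.

Definition log2 (x : R) : R := ln x / ln 2.

Definition supp_size (q : nat) (u : 'I_q -> R) : nat := #|[pred i | 0 < u i]|.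

End Defs.

From HB Require Import structures.
From mathcomp Require Import all_boot all_order all_algebra.
From mathcomp Require Import all_classical all_reals all_analysis.
From mathcomp Require Import zify ring lra.
Import Order.TTheory GRing.Theory Num.Theory.
Set Implicit Arguments. Unset Strict Implicit. Unset Printing Implicit Defensive.
Local Open Scope ring_scope.

(** Size-biasing the multinomial law gives
    M_{n+1,u}(t) t_c = (n+1) u_c M_{n,u}(t - e_c).  Hence, when u_a and u_b
    are positive, M_{n,u}(t - e_b) - M_{n,u}(t - e_a) = M_{n+1,u}(t) X(t)/(n+1)
    with X = t_b/u_b - t_a/u_a, a centred variable whose second moment under
    M_{n+1,u} is (n+1)(1/u_a + 1/u_b).  Bounding |X| <= (X^2 + s^2)/(2s) with
    s = sqrt(n+1) yields D_ab = O(1/sqrt n), which is stronger than the claim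
    since log2 n >= 1 for n >= 2.  If instead u_a = 0, say, then t - e_b and
    t - e_a never both carry mass (the first has a positive a-coordinate), so
    D_ab is the sum of the two total masses, i.e. 2. *)

Lemma leq_add_bigD2 q (f : 'I_q -> nat) (i c : 'I_q) : i != c ->
  (f i + f c <= \sum_(j < q) f j)%N.
Proof.
move=> ic; rewrite (bigD1 i) //= (bigD1 c) /=; last by rewrite eq_sym.
by rewrite addnA leq_addr.
Qed.

Section SimplexSum.
Context (V : nmodType) (q : nat).
Implicit Types (F G : ('I_q -> nat) -> V).

Definition simplex_sum m F : V :=
  \sum_(t : {ffun 'I_q -> 'I_m.+1} | (\sum_(i < q) (t i : nat) == m)%N)
     F (fun i => (t i : nat)).

Lemma eq_simplex_sum m F G :
  (forall t, (\sum_(i < q) t i = m)%N -> F t = G t) ->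
  simplex_sum m F = simplex_sum m G.
Proof. by move=> h; apply: eq_bigr => t /eqP; apply: h. Qed.

Lemma simplex_sumD m F G :
  simplex_sum m (fun t => F t + G t) = simplex_sum m F + simplex_sum m G.
Proof. by rewrite /simplex_sum big_split. Qed.

Lemma simplex_sum_bigr m (f : 'I_q -> ('I_q -> nat) -> V) :
  simplex_sum m (fun t => \sum_(c < q) f c t) = \sum_(c < q) simplex_sum m (f c).
Proof. by rewrite /simplex_sum exchange_big. Qed.

Lemma simplex_sum0 F : simplex_sum 0 F = F (fun _ => 0%N).
Proof.
rewrite /simplex_sum (big_pred1 [ffun=> ord0]).
  by congr F; apply: funext => i; rewrite ffunE.
move=> t /=; have -> : t = [ffun=> ord0].
  by apply/ffunP => i; rewrite ffunE; apply: val_inj; case: (t i) => [[]].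
by rewrite eqxx; apply/eqP; apply: big1 => i _; rewrite ffunE.
Qed.

(* The bijection t |-> t - e_c from {t in N_{q,k+1} | t_c > 0} onto N_{q,k}. *)
Lemma simplex_sum_shift k (c : 'I_q) G :
  simplex_sum k.+1 (fun t => if (0 < t c)%N then G (fun i => t i - (i == c))%N else 0)
  = simplex_sum k G.
Proof.
rewrite /simplex_sum -big_mkcondr /=.
pose up (s : {ffun 'I_q -> 'I_k.+1}) : {ffun 'I_q -> 'I_k.+2} :=
  [ffun i => inord (s i + (i == c))].
pose down (t : {ffun 'I_q -> 'I_k.+2}) : {ffun 'I_q -> 'I_k.+1} :=
  [ffun i => inord (t i - (i == c))].
have upE s i : (up s i : nat) = (s i + (i == c))%N.
  by rewrite ffunE inordK // ltnS; have := ltn_ord (s i); case: (i == c); lia.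
rewrite (reindex_onto up down) /=.
  apply: eq_big => s.
    rewrite upE eqxx addn1 ltn0Sn andbT.
    under eq_bigr do rewrite upE.
    rewrite big_split /= -big_mkcond /= big_pred1_eq addn1 eqSS.
    case: eqP => //= _; apply/eqP/ffunP => i; apply: val_inj.
    by rewrite ffunE /= upE addnK inordK.
  by move=> _; congr G; apply: funext => i; rewrite upE addnK.
move=> t /andP [/eqP sum_t tc_gt0]; apply/ffunP => i; apply: val_inj.
have ti_lt : (t i - (i == c) < k.+1)%N.
  case: (eqVneq i c) => [->|ic] /=; first by have := ltn_ord (t c); lia.
  by have := leq_add_bigD2 (fun j => (t j : nat)) ic; rewrite /= sum_t; lia.
rewrite !ffunE /= (inordK ti_lt) subnK; first by rewrite inord_val.
by case: eqP => // ->.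
Qed.

End SimplexSum.

Lemma ler_simplex_sum (R : numDomainType) q m (F G : ('I_q -> nat) -> R) :
  (forall t, (\sum_(i < q) t i = m)%N -> F t <= G t) ->
  simplex_sum m F <= simplex_sum m G.
Proof. by move=> h; apply: ler_sum => t /eqP; apply: h. Qed.

Lemma simplex_sumZ (R : pzSemiRingType) q m (k : R) (F : ('I_q -> nat) -> R) :
  simplex_sum m (fun t => k * F t) = k * simplex_sum m F.
Proof. by rewrite /simplex_sum mulr_sumr. Qed.

Lemma Dab_simplex_sum (R : realType) q n (Q : ('I_q -> nat) -> R) (a b : 'I_q) :
  Dab n Q a b = simplex_sum n.+1 (fun t => `|shiftQ Q t b - shiftQ Q t a|).
Proof. by []. Qed.

Section Multinomial.
Context (R : realType) (q : nat) (u : 'I_q -> R).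

Lemma multinom_size_bias n (t : 'I_q -> nat) (c : 'I_q) :
  (\sum_(i < q) t i = n.+1)%N ->
  multinom n.+1 u t * (t c)%:R = n.+1%:R * u c * shiftQ (multinom n u) t c.
Proof.
move=> sum_t; rewrite /shiftQ; case: posnP => [->|]; first by rewrite !mulr0.
case tc: (t c) => [//|k] _.
set t' := fun i => (t i - (i == c))%N.
have t'E i : i != c -> t' i = t i by move=> /negbTE ic; rewrite /t' ic subn0.
have t'c : t' c = k by rewrite /t' tc eqxx subn1.
have sum_t' : (\sum_(i < q) t' i = n)%N.
  rewrite (bigD1 c) //= t'c (eq_bigr _ t'E).
  by move: sum_t; rewrite (bigD1 c) //= tc addSn => -[].
have fact_t : (\prod_(i < q) (t i)`! = (\prod_(i < q) (t' i)`!) * k.+1)%N.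
  rewrite (bigD1 c) //= [in RHS](bigD1 c) //= t'c tc factS.
  by rewrite (eq_bigr _ (fun i ic => congr1 factorial (t'E i ic))); ring.
have pow_t : \prod_(i < q) u i ^+ t i = (\prod_(i < q) u i ^+ t' i) * u c.
  rewrite (bigD1 c) //= [in RHS](bigD1 c) //= t'c tc exprS.
  by rewrite (eq_bigr _ (fun i ic => congr1 (GRing.exp (u i)) (t'E i ic))); ring.
rewrite /multinom sum_t sum_t' !eqxx fact_t pow_t factS !natrM.
have fact_t'_neq0 : ((\prod_(i < q) (t' i)`!)%N%:R : R) != 0.
  by rewrite pnatr_eq0 -lt0n prodn_gt0 // => i; exact: fact_gt0.
by field; rewrite fact_t'_neq0 /= addrC natr1.
Qed.

Lemma multinom_ge0 m t : (forall i, 0 <= u i) -> 0 <= multinom m u t.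
Proof.
move=> u_ge0; rewrite /multinom; case: ifP => _ //.
apply: mulr_ge0; first by apply: divr_ge0; apply: ler0n.
by apply: prodr_ge0 => i _; apply: exprn_ge0.
Qed.

Lemma shiftQ_multinom_eq0 n (c d : 'I_q) (t : 'I_q -> nat) :
  u c = 0 -> d != c -> (0 < t c)%N -> shiftQ (multinom n u) t d = 0.
Proof.
move=> uc0 dc tc; rewrite /shiftQ /multinom; case: ifP => // _; case: ifP => // _.
rewrite [X in _ * X](bigD1 c) //= [c == d]eq_sym (negbTE dc) subn0 uc0 expr0n.
by case: (t c) tc => // k _; rewrite mul0r mulr0.
Qed.

Definition mexpect m (g : ('I_q -> nat) -> R) : R :=
  simplex_sum m (fun t => multinom m u t * g t).

Lemma mexpectZ m k g : mexpect m (fun t => k * g t) = k * mexpect m g.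
Proof. by rewrite /mexpect -simplex_sumZ; apply: eq_simplex_sum => t _; ring. Qed.

Lemma mexpectD m f g : mexpect m (fun t => f t + g t) = mexpect m f + mexpect m g.
Proof. by rewrite /mexpect -simplex_sumD; apply: eq_simplex_sum => t _; ring. Qed.

Lemma mexpect_size_bias m (c : 'I_q) g :
  mexpect m.+1 (fun t => (t c)%:R * g t) =
  m.+1%:R * u c * mexpect m (fun s => g (fun i => (s i + (i == c))%N)).
Proof.
rewrite /mexpect -simplex_sumZ -[RHS](simplex_sum_shift _ c).
apply: eq_simplex_sum => t sum_t; rewrite mulrA multinom_size_bias // /shiftQ.
case: ifP => tc; last by rewrite !mulr0 mul0r.
rewrite -mulrA; congr (_ * (_ * _)); congr g; apply: funext => i.
by case: eqP => [->|]; rewrite ?subn0 ?addn0 // subnK.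
Qed.

Hypothesis u_sum : \sum_(i < q) u i = 1.

(* Size-biasing in each coordinate: sum_c t_c = m turns E_m[1] into E_{m-1}[1]. *)
Lemma mexpect1 m : mexpect m (fun _ => 1) = 1.
Proof.
elim: m => [|k IH].
  rewrite /mexpect simplex_sum0 /multinom big1_eq eqxx fact0 big1_eq.
  by rewrite (eq_bigr (fun=> 1) (fun i _ => expr0 (u i))) big1_eq divr1 !mulr1.
have kS_neq0 : k.+1%:R != 0 :> R by rewrite pnatr_eq0.
transitivity (mexpect k.+1 (fun t => k.+1%:R^-1 * \sum_(c < q) (t c)%:R * 1)).
  apply: eq_simplex_sum => t sum_t; congr (_ * _).
  by under eq_bigr do rewrite mulr1; rewrite -natr_sum sum_t mulVf.
rewrite mexpectZ /mexpect.
under eq_simplex_sum do rewrite mulr_sumr.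
rewrite simplex_sum_bigr.
under eq_bigr do rewrite -/(mexpect _ _) mexpect_size_bias IH mulr1.
by rewrite -mulr_sumr u_sum mulr1 mulVf.
Qed.

Lemma mexpect_cst m k : mexpect m (fun _ => k) = k.
Proof.
rewrite -[RHS]mulr1 -(mexpect1 m) -mexpectZ.
by apply: eq_simplex_sum => t _; rewrite mulr1.
Qed.

Lemma simplex_sum_multinom m : simplex_sum m (multinom m u) = 1.
Proof. by rewrite -(mexpect1 m); apply: eq_simplex_sum => t _; rewrite mulr1. Qed.

Lemma mexpect_coord m c : mexpect m (fun t => (t c)%:R) = m%:R * u c.
Proof.
case: m => [|k]; first by rewrite /mexpect simplex_sum0 mulr0 mul0r.
transitivity (mexpect k.+1 (fun t => (t c)%:R * 1)).
  by apply: eq_simplex_sum => t _; rewrite mulr1.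
by rewrite mexpect_size_bias mexpect_cst mulr1.
Qed.

Lemma mexpect_coord2 m c d :
  mexpect m.+1 (fun t => (t c)%:R * (t d)%:R) =
  m.+1%:R * u c * (m%:R * u d + (d == c)%:R).
Proof.
rewrite mexpect_size_bias; congr (_ * _).
under [X in mexpect _ X]funext => s do rewrite natrD.
by rewrite mexpectD mexpect_coord mexpect_cst.
Qed.

Lemma mexpect_sqr_ratio_diff m (a b : 'I_q) : a != b -> u a != 0 -> u b != 0 ->
  mexpect m.+1 (fun t => ((t b)%:R / u b - (t a)%:R / u a) ^+ 2) =
  m.+1%:R * ((u a)^-1 + (u b)^-1).
Proof.
move=> ab ua0 ub0.
transitivity (mexpect m.+1 (fun t => (u b ^+ 2)^-1 * ((t b)%:R * (t b)%:R) +
   ((- 2 / (u a * u b)) * ((t a)%:R * (t b)%:R) +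
    (u a ^+ 2)^-1 * ((t a)%:R * (t a)%:R)))).
  by apply: eq_simplex_sum => t _; congr (_ * _); field; rewrite ua0 ub0.
rewrite !mexpectD !mexpectZ !mexpect_coord2 !eqxx eq_sym (negbTE ab) /=.
by field; rewrite ua0 ub0.
Qed.

End Multinomial.

Lemma normr_le_AMGM (R : realFieldType) (x s : R) :
  0 < s -> `|x| <= (x ^+ 2 + s ^+ 2) / (2 * s).
Proof.
move=> s_gt0; rewrite ler_pdivlMr ?mulr_gt0 // -(real_normK (num_real x)).
by have := sqr_ge0 (`|x| - s); rewrite sqrrB; lra.
Qed.

Section DabMultinomial.
Context (R : realType) (q : nat) (u : 'I_q -> R).
Hypothesis u_ge0 : forall i, 0 <= u i.
Hypothesis u_sum : \sum_(i < q) u i = 1.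

Lemma shiftQ_multinom_ge0 n t c : 0 <= shiftQ (multinom n u) t c.
Proof. by rewrite /shiftQ; case: ifP => // _; exact: multinom_ge0. Qed.

Lemma Dab_multinom_outside_supp n (a b : 'I_q) : a != b -> (u a = 0 \/ u b = 0) ->
  Dab n (multinom n u) a b = 2.
Proof.
move=> ab u_ab0; rewrite Dab_simplex_sum.
transitivity (simplex_sum n.+1
  (fun t => shiftQ (multinom n u) t b + shiftQ (multinom n u) t a)).
  apply: eq_simplex_sum => t _.
  have [->|->] : shiftQ (multinom n u) t a = 0 \/ shiftQ (multinom n u) t b = 0.
      case ta: (0 < t a)%N; last by left; rewrite /shiftQ ta.
      case tb: (0 < t b)%N; last by right; rewrite /shiftQ tb.
      case: u_ab0 => [ua0|ub0]; [right | left].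
        by apply: shiftQ_multinom_eq0 ua0 _ ta; rewrite eq_sym.
      exact: shiftQ_multinom_eq0 ub0 ab tb.
    by rewrite subr0 addr0 ger0_norm // shiftQ_multinom_ge0.
  by rewrite sub0r add0r normrN ger0_norm // shiftQ_multinom_ge0.
by rewrite simplex_sumD !simplex_sum_shift simplex_sum_multinom.
Qed.

Lemma shiftQ_multinom_size_bias n t c : (\sum_(i < q) t i = n.+1)%N -> u c != 0 ->
  shiftQ (multinom n u) t c = n.+1%:R^-1 * (multinom n.+1 u t * ((t c)%:R / u c)).
Proof.
move=> sum_t uc0; apply: (mulfI (_ : n.+1%:R * u c != 0)).
  by rewrite mulf_neq0 ?pnatr_eq0.
by rewrite -multinom_size_bias //; field; rewrite uc0 /= addrC natr1 pnatr_eq0.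
Qed.

Lemma Dab_multinom_le n (a b : 'I_q) : a != b -> 0 < u a -> 0 < u b ->
  Dab n (multinom n u) a b <= ((u a)^-1 + (u b)^-1 + 1) / 2 / Num.sqrt n.+1%:R.
Proof.
move=> ab ua_gt0 ub_gt0.
have [ua0 ub0] : u a != 0 /\ u b != 0 by rewrite !gt_eqF.
set m : R := n.+1%:R; have m_gt0 : 0 < m by rewrite ltr0n.
set s := Num.sqrt m; have s_gt0 : 0 < s by rewrite sqrtr_gt0.
have ssm : s * s = m by rewrite -expr2 sqr_sqrtr // ltW.
set X := fun t : 'I_q -> nat => (t b)%:R / u b - (t a)%:R / u a.
rewrite Dab_simplex_sum.
apply: (@le_trans _ _ (m^-1 * mexpect u n.+1 (fun t => (X t ^+ 2 + s ^+ 2) / (2 * s)))).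
  rewrite -simplex_sumZ; apply: ler_simplex_sum => t sum_t.
  rewrite !shiftQ_multinom_size_bias // -!mulrBr !normrM normfV normr_nat.
  rewrite (ger0_norm (multinom_ge0 _ _ u_ge0)).
  apply: ler_wpM2l; first by rewrite invr_ge0 ltW.
  by apply: ler_wpM2l; [exact: multinom_ge0 | exact: normr_le_AMGM].
have -> : mexpect u n.+1 (fun t => (X t ^+ 2 + s ^+ 2) / (2 * s)) =
          mexpect u n.+1 (fun t => (2 * s)^-1 * X t ^+ 2 + (2 * s)^-1 * s ^+ 2).
  by apply: eq_simplex_sum => t _; rewrite mulrDl !(mulrC _^-1).
rewrite mexpectD mexpectZ mexpect_cst // mexpect_sqr_ratio_diff // -/m expr2 ssm.
by rewrite le_eqVlt; apply/orP; left; apply/eqP; field; rewrite !gt_eqF.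
Qed.

End DabMultinomial.

Lemma log2_nat_ge1 (R : realType) n : (2 <= n)%N -> 1 <= log2 (n%:R : R).
Proof.
move=> n_ge2; have ln2_gt0 : 0 < ln (2 : R) by apply: ln_gt0; lra.
rewrite /log2 ler_pdivlMr // mul1r ler_ln ?posrE ?ltr0n //; last by lia.
by rewrite (ler_nat _ 2).
Qed.

Lemma ler_div_sqrtS_log2 (R : realType) n (C e : R) :
  (2 <= n)%N -> 0 <= C -> 0 <= e ->
  C / Num.sqrt n.+1%:R <= C * log2 (n%:R : R) `^ e / Num.sqrt n%:R.
Proof.
move=> n_ge2 C_ge0 e_ge0.
have sqrt_gt0 : 0 < Num.sqrt (n%:R : R) by rewrite sqrtr_gt0 ltr0n; lia.
have L_ge1 : 1 <= log2 (n%:R : R) `^ e.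
  have {1}-> : 1 = 1 `^ e :> R by rewrite powR1.
  rewrite ge0_ler_powR ?nnegrE ?log2_nat_ge1 //.
  exact: le_trans (log2_nat_ge1 _ n_ge2).
rewrite -mulrA ler_wpM2l // -[X in X <= _]mul1r.
apply: ler_pM => //.
rewrite lef_pV2 ?posrE ?sqrtr_gt0 ?ltr0n //; last by lia.
by rewrite ler_sqrt ?ler_nat.
Qed.

Lemma supp_size_ge2 (R : realType) q (u : 'I_q -> R) (a b : 'I_q) :
  a != b -> 0 < u a -> 0 < u b -> (2 <= supp_size u)%N.
Proof.
move=> ab ua_gt0 ub_gt0; have <- : #|[set a; b]| = 2%N by rewrite cards2 ab.
by apply: subset_leq_card; apply/fintype.subsetP => i; rewrite !inE => /orP[]/eqP->.
Qed.

Unset Implicit Arguments.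
Set Strict Implicit.

Theorem lemma3 (R : realType) (q : nat) (hq : (2 <= q)%N) (u : 'I_q -> R)
  (u_ge0 : forall i, 0 <= u i) (u_sum : \sum_(i < q) u i = 1)
  (a b : 'I_q) (hab : a != b) :
  exists C1 : R, exists N : nat, forall n : nat, (N <= n)%N ->
    [/\ (u a = 0 \/ u b = 0) -> Dab n (multinom n u) a b = 2,
        (0 < u a /\ 0 < u b) ->
          Dab n (multinom n u) a b <=
            C1 * (log2 n%:R) `^ (((supp_size u)%:R - 2) / 2) / Num.sqrt (n%:R)
      & (forall i, 0 < u i) ->
          Dab n (multinom n u) a b <=
            C1 * (log2 n%:R) `^ ((q%:R - 2) / 2) / Num.sqrt (n%:R)].
Proof.
set C := ((u a)^-1 + (u b)^-1 + 1) / 2.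
have C_ge0 : 0 <= C by rewrite divr_ge0 // !addr_ge0 // invr_ge0.
have exp_ge0 k : (2 <= k)%N -> 0 <= (k%:R - 2 : R) / 2.
  by move=> k_ge2; rewrite divr_ge0 // subr_ge0 ler_nat.
exists C, 2%N => n n_ge2; split.
- exact: Dab_multinom_outside_supp.
- move=> [ua_gt0 ub_gt0].
  apply: le_trans (Dab_multinom_le u_ge0 u_sum n hab ua_gt0 ub_gt0) _.
  by rewrite ler_div_sqrtS_log2 // exp_ge0 // (supp_size_ge2 hab).
- move=> u_gt0; apply: le_trans (Dab_multinom_le u_ge0 u_sum n hab (u_gt0 a) (u_gt0 b)) _.
  by rewrite ler_div_sqrtS_log2 // exp_ge0.
Qed.
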